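(* Let $H:\mathbb R\times\mathbb R\times\Omega\to\mathbb R$ satisfy (H1)–(H6) described in the context. Then for every $\omega\in\Omega$, $$\tilde A(\omega)=\inf_{v\in\mathbf{Lip}}\ \sup_{y\in\mathbb R}H(Dv,y,\omega)=\sup_{y\in\mathbb R}H(0,y,\omega)<\infty.$$
   Context: $\Omega$ is a set (a probability space) and $H:\mathbb R\times\mathbb R\times\Omega\to\mathbb R$, $(p,y,\omega)\mapsto H(p,y,\omega)$. (H1) $H$ is Lipschitz in $p$ uniformly in $(y,\omega)$. (H2) There are $c_0,C_0,\gamma>0$ with $-c_0|p+\gamma|\le H(p,y,\omega)\le C_0|p+\gamma|$. (H3) $\lim_{|p|\to\infty}\inf_{(y,\omega)}H(p,y,\omega)=+\infty$. (H4) There is a modulus $w$ with $|H(p,y,\omega)-H(p,x,\omega)|\le w(|x-y|(1+|p|))$. (H5) $p\mapsto H(p,y,\omega)$ is convex. (H6) $H(p,y,\omega)\ge H(0,y,\omega)$ for all $p,y,\omega$. $\mathbf{Lip}$ denotes the set of globally Lipschitz real functions on $\mathbb R$. The stochastic flux limiter is $\tilde A(\omega)=\inf\{\mu:\ \exists v\in\mathbf{Lip}$ with $H(Dv,y,\omega)\le\mu$ in $\mathbb R$ in the viscosity sense$\}$. *)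

From HB Require Import structures.
From mathcomp Require Import all_boot all_order all_algebra.
From mathcomp Require Import all_classical all_reals all_analysis.
From mathcomp Require Import ess_sup_inf.
Set Implicit Arguments. Unset Strict Implicit. Unset Printing Implicit Defensive.
Import Order.TTheory GRing.Theory Num.Theory.
Import numFieldNormedType.Exports.
Local Open Scope classical_set_scope.
Local Open Scope ring_scope.

Definition Lip {R : realType} (v : R -> R) : Prop :=
  exists L : R, forall x y : R, `|v x - v y| <= L * `|x - y|.

Definition modulus {R : realType} (w : R -> R) : Prop :=
  w 0 = 0 /\ (forall r, 0 <= r -> 0 <= w r) /\
  (forall r s, 0 <= r -> r <= s -> w r <= w s) /\
  (forall e, 0 < e -> exists d, 0 < d /\ forall r, 0 <= r -> r < d -> w r < e).

Definition C1 {R : realType} (phi : R -> R) : Prop :=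
  (forall x : R, derivable phi x 1) /\ continuous (derive1 phi).

Definition visc_sub {R : realType} {Omega : Type} (H : R -> R -> Omega -> R)
  (omega : Omega) (v : R -> R) (mu : R) : Prop :=
  continuous v /\
  forall (phi : R -> R) (y0 : R), C1 phi ->
    (\forall y \near y0, v y - phi y <= v y0 - phi y0) ->
    H (derive1 phi y0) y0 omega <= mu.

(** stochastic flux limiter  A~(omega) (an extended real, inf of the empty set = +oo) *)
Definition flux_limiter {R : realType} {Omega : Type} (H : R -> R -> Omega -> R)
  (omega : Omega) : \bar R :=
  ereal_inf [set (mu%:E) | mu in [set mu : R | exists v, Lip v /\ visc_sub H omega v mu]].

(** sup_y H(Dv, y, omega) for Lipschitz v: essential supremum w.r.t. Lebesgue
    measure of y |-> H(v'(y), y, omega) (v' exists a.e. by Rademacher) *)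
Definition sup_H_Dv {R : realType} {Omega : Type} (H : R -> R -> Omega -> R)
  (omega : Omega) (v : R -> R) : \bar R :=
  ess_sup (@lebesgue_measure R) (fun y => (H (derive1 v y) y omega)%:E).

Definition inf_sup_H {R : realType} {Omega : Type} (H : R -> R -> Omega -> R)
  (omega : Omega) : \bar R :=
  ereal_inf [set sup_H_Dv H omega v | v in [set v : R -> R | Lip v]].

Definition sup_H0 {R : realType} {Omega : Type} (H : R -> R -> Omega -> R)
  (omega : Omega) : \bar R :=
  ereal_sup [set (H 0 y omega)%:E | y in [set: R]].

From HB Require Import structures.
From mathcomp Require Import all_boot all_order all_algebra.
From mathcomp Require Import all_classical all_reals all_analysis.
From mathcomp Require Import ring lra ess_sup_inf.
Import Order.TTheory GRing.Theory Num.Theory.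
Import numFieldNormedType.Exports.
Local Open Scope classical_set_scope.
Local Open Scope ring_scope.

(* Write h y := H 0 y omega.  By (H2) h is bounded above and by (H4) it is
   continuous, so its supremum A is finite.  By (H6) H p y omega >= h y, so the
   essential supremum of y |-> H (v' y) y omega is at least h on a set of full
   measure, hence everywhere by continuity; v = 0 attains A.  For the flux
   limiter, v = 0 is a subsolution of H <= A, because a C^1 function touching a
   constant from above has zero derivative there.  Conversely, if a Lipschitz v
   is a subsolution of H <= mu, subtracting a parabola that is steep relative to
   the Lipschitz constant gives an interior maximum of v - phi in any interval,
   where h <= H phi' <= mu; thus h <= mu on a dense set, hence everywhere.
   Only (H2), (H4) and (H6) are needed. *)

Section RealFunctions.
Context {R : realType}.
Implicit Types (f : R -> R) (x : R) (z : \bar R).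

Lemma continuous_of_modulus f (w : R -> R) :
  modulus w -> (forall x y, `|f x - f y| <= w `|x - y|) -> continuous f.
Proof.
move=> [_ [_ [_ w_small]]] fw x; apply/cvgrPdist_lt => e e0.
have [d [d0 wd]] := w_small e e0.
apply/nbhs_ballP; exists d => // y xy.
exact: le_lt_trans (fw x y) (wd _ (normr_ge0 _) xy).
Qed.

Lemma le_of_nearby_le f x z : {for x, continuous f} ->
  (forall d, 0 < d -> exists2 y, `|x - y| < d & ((f y)%:E <= z)%E) ->
  ((f x)%:E <= z)%E.
Proof.
move=> fx near_le; case: z near_le => [z| |] near_le; last 2 first.
- by rewrite leey.
- by have [y _] := near_le 1 ltr01; rewrite leeNy_eq.
rewrite lee_fin; apply/ler_addgt0Pr => e e0.
have /cvgrPdist_lt /(_ e e0) /nbhs_ballP [d d0 fd] := fx.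
have [y xy] := near_le d d0; rewrite lee_fin => fyz.
by have /ltr_normlP [_] := fd y xy; lra.
Qed.

Lemma ereal_sup_le_of_nearby_le f z : continuous f ->
  (forall x d, 0 < d -> exists2 y, `|x - y| < d & ((f y)%:E <= z)%E) ->
  (ereal_sup [set (f y)%:E | y in [set: R]] <= z)%E.
Proof.
move=> fc near_le; apply: ge_ereal_sup => _ [x _ <-].
exact: le_of_nearby_le (fc x) (near_le x).
Qed.

Lemma ereal_sup_le_ess_sup f : continuous f ->
  (ereal_sup [set (f y)%:E | y in [set: R]] <=
   ess_sup lebesgue_measure (EFin \o f))%E.
Proof.
move=> fc; apply: ereal_sup_le_of_nearby_le => // x d d0.
have [N [mN N0 fN]] := ess_sup_ge lebesgue_measure (EFin \o f).
apply: contrapT => far.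
have ballN : ball x d `<=` N.
  by move=> y xy; apply: fN => /= fy; apply: far; exists y.
have : (lebesgue_measure (ball x d) <= lebesgue_measure N)%E.
  by apply: le_measure; rewrite ?inE //; exact: measurable_realfun.measurable_ball.
by rewrite N0 (lebesgue_measure_ball _ (ltW d0)) lee_fin; lra.
Qed.

Lemma derive1_eq0_at_local_min (phi : R -> R) x :
  (forall y, derivable phi y 1) -> (\forall y \near x, phi x <= phi y) ->
  derive1 phi x = 0.
Proof.
move=> dphi /nbhs_ballP [e /= e0 xmin].
have x_in : x \in `]x - e, x + e[ by rewrite in_itv /= -ltr_distlC subrr normr0.
have min0 : is_derive x 1 phi 0.
  apply: (derive1_at_min _ _ x_in) => [|y _|y]; first lra; first exact: dphi.
  by rewrite in_itv /= -ltr_distlC; apply: xmin.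
by rewrite derive1E derive_val.
Qed.

Lemma C1_parabola (K x0 : R) : C1 (fun x => K * (x - x0) ^+ 2).
Proof.
have D x : is_derive x 1 (fun y => K * (y - x0) ^+ 2) (K * (2 * (x - x0))).
  by apply: is_derive_eq; rewrite /GRing.scale /=; ring.
split=> [x|]; first exact: ex_derive.
have -> : derive1 (fun y => K * (y - x0) ^+ 2) = fun x => K * (2 * (x - x0)).
  by apply: funext => x; rewrite derive1E derive_val.
move=> x; apply: differentiable_continuous; apply/derivable1_diffP.
by apply: ex_derive; apply: is_derive_eq.
Qed.

Lemma Lip_cst (c : R) : Lip (cst c).
Proof. by exists 0 => x y; rewrite subrr normr0 mul0r. Qed.

Lemma C1_continuous (phi : R -> R) : C1 phi -> continuous phi.
Proof.
by move=> [dphi _] x; apply/differentiable_continuous/derivable1_diffP.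
Qed.

Lemma Lip_touched_above_by_parabola (v : R -> R) x0 d :
  Lip v -> continuous v -> 0 < d ->
  exists2 phi, C1 phi &
    exists2 x, `|x0 - x| < d & \forall y \near x, v y - phi y <= v x - phi x.
Proof.
move=> [L vL] vc d0; pose K := (`|L| + 1) / d.
pose phi x := K * (x - x0) ^+ 2; exists phi; first exact: C1_parabola.
have phic : continuous phi by apply: C1_continuous; exact: C1_parabola.
have [x x_in xmax] : exists2 x, x \in `[x0 - d, x0 + d] &
    forall y, y \in `[x0 - d, x0 + d] -> v y - phi y <= v x - phi x.
  apply: EVT_max; first lra.
  by apply: continuous_subspaceT => y; exact: (continuousB (vc y) (phic y)).
(* K d^2 = (|L| + 1) d beats the oscillation of v, so the maximum is inner. *)
have edge y : `|x0 - y| = d -> v y - phi y < v x0 - phi x0.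
  move=> x0y; have sq : (y - x0) ^+ 2 = d ^+ 2.
    by rewrite -real_normK ?num_real // distrC x0y.
  rewrite /phi sq subrr expr0n mulr0 subr0 /K expr2 mulrA divfK ?gt_eqF //.
  by have := vL x0 y; rewrite x0y => /ler_normlP [+ _]; have := ler_norm L; nra.
have x_inner : `|x0 - x| < d.
  have : `|x0 - x| <= d by move: x_in; rewrite in_itv /= -ler_distlC.
  rewrite le_eqVlt => /predU1P [/edge|//].
  by rewrite ltNge xmax // in_itv /= -ler_distlC subrr normr0 ltW.
exists x => //; near=> y; apply: xmax; apply: subset_itv_oo_cc; near: y.
by apply: near_in_itvoo; rewrite in_itv /= -ltr_distlC.
Unshelve. all: by end_near.
Qed.

End RealFunctions.

Section FluxLimiter.
Context {R : realType} {Omega : Type} {H : R -> R -> Omega -> R} {omega : Omega}.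
Hypothesis H0_min : forall p y, H 0 y omega <= H p y omega.
Hypothesis H0_continuous : continuous (fun y => H 0 y omega).

Lemma visc_sub_cst (c mu : R) :
  (forall y, H 0 y omega <= mu) -> visc_sub H omega (cst c) mu.
Proof.
move=> H0_le; split=> [|phi y0 [dphi _] touch]; first exact: cst_continuous.
rewrite (derive1_eq0_at_local_min _ _ dphi) //.
by apply: filterS touch => y /=; rewrite lerD2l lerN2.
Qed.

Lemma visc_sub_nearby_H0_le {v : R -> R} {mu : R} :
  Lip v -> visc_sub H omega v mu ->
  forall y0 d, 0 < d -> exists2 y, `|y0 - y| < d & H 0 y omega <= mu.
Proof.
move=> Lv [vc vsub] y0 d d0.
have [phi C1phi [y y0y touch]] := Lip_touched_above_by_parabola _ y0 _ Lv vc d0.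
by exists y => //; apply: le_trans (H0_min _ _) (vsub _ _ C1phi touch).
Qed.

Lemma sup_H0_le_flux_limiter : (sup_H0 H omega <= flux_limiter H omega)%E.
Proof.
apply: le_ereal_inf_tmp => _ [mu [v [Lv vsub]] <-].
apply: ereal_sup_le_of_nearby_le => // y0 d d0.
have [y y0y H0y] := visc_sub_nearby_H0_le Lv vsub y0 d d0.
by exists y; rewrite ?lee_fin.
Qed.

Lemma flux_limiter_le_sup_H0 : sup_H0 H omega \is a fin_num ->
  (flux_limiter H omega <= sup_H0 H omega)%E.
Proof.
move=> sup_fin; rewrite -(fineK sup_fin); apply: ereal_inf_lbound.
exists (fine (sup_H0 H omega)) => //; exists (cst 0); split; first exact: Lip_cst.
apply: visc_sub_cst => y; rewrite -lee_fin fineK //.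
by apply: ereal_sup_ubound; exists y.
Qed.

Lemma sup_H0_le_sup_H_Dv (v : R -> R) : (sup_H0 H omega <= sup_H_Dv H omega v)%E.
Proof.
apply: le_trans (ereal_sup_le_ess_sup _ H0_continuous) _.
by apply: le_ess_sup; apply: aeW => y /=; rewrite lee_fin.
Qed.

Lemma sup_H_Dv_cst (c : R) : (sup_H_Dv H omega (cst c) <= sup_H0 H omega)%E.
Proof.
apply: ess_sup_ler => y; rewrite derive1_cst.
by apply: ereal_sup_ubound; exists y.
Qed.

Lemma inf_sup_H_eq_sup_H0 : inf_sup_H H omega = sup_H0 H omega.
Proof.
apply/le_anti/andP; split.
  apply: le_trans (sup_H_Dv_cst 0); apply: ereal_inf_lbound.
  by exists (cst 0); first exact: Lip_cst.
by apply: le_ereal_inf_tmp => _ [v _ <-]; apply: sup_H0_le_sup_H_Dv.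
Qed.

End FluxLimiter.

Theorem lemma4p1 (R : realType) (Omega : Type) (H : R -> R -> Omega -> R)
  (* (H1) Lipschitz in p, uniformly in (y, omega) *)
  (H1 : exists L : R, forall (p q y : R) (omega : Omega),
          `|H p y omega - H q y omega| <= L * `|p - q|)
  (* (H2) *)
  (H2 : exists c0 C0 gamma : R, 0 < c0 /\ 0 < C0 /\ 0 < gamma /\
          forall (p y : R) (omega : Omega),
            - (c0 * `|p + gamma|) <= H p y omega /\ H p y omega <= C0 * `|p + gamma|)
  (* (H3) coercivity, uniformly in (y, omega) *)
  (H3 : forall M : R, exists r0 : R, forall (p y : R) (omega : Omega),
          r0 <= `|p| -> M <= H p y omega)
  (* (H4) *)
  (H4 : exists w : R -> R, modulus w /\
          forall (p x y : R) (omega : Omega),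
            `|H p y omega - H p x omega| <= w (`|x - y| * (1 + `|p|)))
  (* (H5) convexity in p *)
  (H5 : forall (y : R) (omega : Omega) (t p q : R), 0 <= t <= 1 ->
          H (t * p + (1 - t) * q) y omega <= t * H p y omega + (1 - t) * H q y omega)
  (* (H6) *)
  (H6 : forall (p y : R) (omega : Omega), H 0 y omega <= H p y omega) :
  forall omega : Omega,
    flux_limiter H omega = inf_sup_H H omega /\
    inf_sup_H H omega = sup_H0 H omega /\
    (sup_H0 H omega < +oo)%E.
Proof.
move=> omega.
have H0_continuous : continuous (fun y => H 0 y omega).
  have [w [w_mod Hw]] := H4; apply: (continuous_of_modulus _ _ w_mod) => x y.
  by have := Hw 0 x y omega; rewrite normr0 addr0 mulr1 distrC.
have sup_lt : (sup_H0 H omega < +oo)%E.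
  have [c0 [C0 [g [_ [_ [_ H_bound]]]]]] := H2.
  apply: le_lt_trans (ltry (C0 * `|g|)); apply: ge_ereal_sup => _ [y _ <-].
  by rewrite lee_fin; have := (H_bound 0 y omega).2; rewrite add0r.
have sup_fin : sup_H0 H omega \is a fin_num.
  have H00 : ((H 0 0 omega)%:E <= sup_H0 H omega)%E.
    by apply: ereal_sup_ubound; exists 0.
  by rewrite fin_numE (lt_eqF sup_lt) andbT -ltNye (lt_le_trans (ltNyr _) H00).
have H0_min p y : H 0 y omega <= H p y omega := H6 p y omega.
have inf_sup_H_eq := inf_sup_H_eq_sup_H0 H0_min H0_continuous.
split; last exact: (conj inf_sup_H_eq sup_lt).
rewrite inf_sup_H_eq; apply/le_anti/andP; split.
  exact: flux_limiter_le_sup_H0.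
exact: sup_H0_le_flux_limiter H0_min H0_continuous.
Qed.
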